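(* Let $\mathcal{U}$ be a measure space with measure $\mu$, $0<\mu(\mathcal{U})<\infty$, and equip $\mathcal{U}^n$ with the product measure. For $i\in[n]$ let $\mathcal{X}_i$ be a family of measurable subsets of $\mathcal{U}$ and let $Q_i\subseteq\mathcal{U}$ be a set of $m$ points with $\mathbf{D}(Q_i,\mathcal{X}_i)\le\varepsilon_i$; let $\sigma_i:[m]\to Q_i$ be injective. Let $P_R\subseteq[m]^n$ be a finite point collection (multiset) with discrepancy at most $\varepsilon_R$ against combinatorial rectangles, i.e. $\left|\frac{|P_R\cap(I_1\times\cdots\times I_n)|}{|P_R|}-\prod_{j=1}^n\frac{|I_j|}{m}\right|\le\varepsilon_R$ for all $I_1,\dots,I_n\subseteq[m]$. Define $\sigma(a_1,\dots,a_n)=(\sigma_1(a_1),\dots,\sigma_n(a_n))$ and the multiset $Q_{[n]}=\{\sigma(p):p\in P_R\}\subseteq\mathcal{U}^n$. Then \[ \mathbf{D}(Q_{[n]},\mathcal{X}_{[n]})\le\varepsilon_R+\sum_{i=1}^n\varepsilon_i, \] where $\mathcal{X}_{[n]}=\{X_1\times\cdots\times X_n: X_i\in\mathcal{X}_i\}$.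
   Context: $[r]=\{1,\dots,r\}$. Discrepancy: $\mathbf{D}(P,\mathcal{X})=\sup_{X\in\mathcal{X}}\left|\frac{|P\cap X|}{|P|}-\frac{\mu(X)}{\mu(\mathcal{U})}\right|$, with points counted with multiplicity. A combinatorial rectangle in $[m]^n$ is a set $I_1\times\cdots\times I_n$ with each $I_j\subseteq[m]$. *)

From Stdlib Require Import Reals List ClassicalEpsilon.
Import ListNotations.
Open Scope R_scope.
Set Implicit Arguments.

Definition is_sigma_algebra {U : Type} (M : (U -> Prop) -> Prop) : Prop :=
  M (fun _ => True) /\
  (forall A, M A -> M (fun x => ~ A x)) /\
  (forall F : nat -> U -> Prop, (forall k, M (F k)) -> M (fun x => exists k, F k x)).

Definition is_finite_measure {U : Type} (M : (U -> Prop) -> Prop)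
    (mu : (U -> Prop) -> R) : Prop :=
  is_sigma_algebra M /\
  mu (fun _ => False) = 0 /\
  (forall A, M A -> 0 <= mu A) /\
  (forall F : nat -> U -> Prop,
      (forall k, M (F k)) ->
      (forall k l, k <> l -> forall x, F k x -> F l x -> False) ->
      infinite_sum (fun k => mu (F k)) (mu (fun x => exists k, F k x))).

Definition indic {T : Type} (A : T -> Prop) (x : T) : R :=
  if excluded_middle_informative (A x) then 1 else 0.
Definition cnt {T : Type} (P : list T) (A : T -> Prop) : R :=
  fold_right (fun x acc => indic A x + acc) 0 P.
Definition frac {T : Type} (P : list T) (A : T -> Prop) : R :=
  cnt P A / INR (length P).

Definition sumR (n : nat) (f : nat -> R) : R := fold_right Rplus 0 (map f (seq 0 n)).
Definition prodR (n : nat) (f : nat -> R) : R := fold_right Rmult 1 (map f (seq 0 n)).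

(* The product set X_0 x ... x X_{n-1}; points of T^n are functions nat -> T
   (only coordinates < n matter). *)
Definition box {T : Type} (n : nat) (X : nat -> T -> Prop) : (nat -> T) -> Prop :=
  fun x => forall i, (i < n)%nat -> X i (x i).

Definition disc_le {U : Type} (mu : (U -> Prop) -> R) (P : list U)
    (Xfam : (U -> Prop) -> Prop) (eps : R) : Prop :=
  forall X, Xfam X -> Rabs (frac P X - mu X / mu (fun _ => True)) <= eps.

(* D(P, X_[n]) <= eps in U^n with the product measure: the product measure of
   X_0 x ... x X_{n-1} is prod mu(X_i), and of U^n is mu(U)^n. *)
Definition disc_prod_le {U : Type} (mu : (U -> Prop) -> R) (n : nat)
    (P : list (nat -> U)) (Xfam : nat -> (U -> Prop) -> Prop) (eps : R) : Prop :=
  forall X : nat -> U -> Prop, (forall i, (i < n)%nat -> Xfam i (X i)) ->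
    Rabs (frac P (box n X) - prodR n (fun i => mu (X i) / mu (fun _ => True))) <= eps.

(* Discrepancy of P subset [m]^n (0-based: {0..m-1}^n) against combinatorial
   rectangles is at most eps. *)
Definition comb_disc_le (n m : nat) (P : list (nat -> nat)) (eps : R) : Prop :=
  forall I : nat -> nat -> Prop, (forall j a, I j a -> (a < m)%nat) ->
    Rabs (frac P (box n I) - prodR n (fun j => cnt (seq 0 m) (I j) / INR m)) <= eps.

(* Pull the rectangle X_1 x ... x X_n back along sigma: it becomes the
   combinatorial rectangle I_1 x ... x I_n with I_j = sigma_j^-1(X_j), so the
   empirical measure of the box under Q_[n] is that of the rectangle under P_R,
   which is eps_R-close to prod_j |I_j|/m.  Since sigma_j enumerates Q_j
   bijectively, |I_j|/m is the empirical measure of X_j under Q_j, which is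
   eps_j-close to mu(X_j)/mu(U).  Finally, replacing one factor at a time in a
   product of numbers from [0,1] costs at most the sum of the changes. *)

From Stdlib Require Import Reals List.
From Stdlib Require Import ClassicalEpsilon Classical Permutation Lra Lia
  FunctionalExtensionality PropExtensionality.
Open Scope R_scope.

Lemma cnt_map {A B : Type} (f : A -> B) (l : list A) (P : B -> Prop) :
  cnt (map f l) P = cnt l (fun x => P (f x)).
Proof.
  induction l as [|x l IH]; [reflexivity|].
  unfold cnt in *; simpl; rewrite IH; reflexivity.
Qed.

Lemma cnt_ext_in {A : Type} (l : list A) (P P' : A -> Prop) :
  (forall x, In x l -> (P x <-> P' x)) -> cnt l P = cnt l P'.
Proof.
  induction l as [|x l IH]; intros HPP'; [reflexivity|].
  unfold cnt in *; simpl.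
  rewrite IH by (intros; apply HPP'; simpl; auto).
  f_equal; unfold indic.
  specialize (HPP' x (or_introl eq_refl)).
  destruct (excluded_middle_informative (P x)), (excluded_middle_informative (P' x));
    tauto.
Qed.

Lemma cnt_perm {A : Type} (l l' : list A) (P : A -> Prop) :
  Permutation l l' -> cnt l P = cnt l' P.
Proof. induction 1; unfold cnt in *; simpl; lra. Qed.

Lemma cnt_bounds {A : Type} (l : list A) (P : A -> Prop) :
  0 <= cnt l P <= INR (length l).
Proof.
  induction l as [|x l IH]; unfold cnt in *; [simpl; lra|].
  cbn [length fold_right]; rewrite S_INR.
  set (c := fold_right _ 0 l) in *.
  unfold indic; destruct excluded_middle_informative; lra.
Qed.

Lemma Rdiv_unit_interval (x y : R) : 0 <= x <= y -> 0 <= x / y <= 1.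
Proof.
  intros Hxy; destruct (Req_dec y 0) as [->|Hy].
  - unfold Rdiv; rewrite Rinv_0; lra.
  - assert (Hy' : 0 < y) by lra.
    pose proof (Rinv_0_lt_compat y Hy').
    unfold Rdiv; split; [nra|].
    replace 1 with (y * / y) by (field; lra); nra.
Qed.

Lemma frac_unit_interval {A : Type} (l : list A) (P : A -> Prop) :
  0 <= frac l P <= 1.
Proof. apply Rdiv_unit_interval, cnt_bounds. Qed.

Lemma cnt_enum {A : Type} (f : nat -> A) (m : nat) (Q : list A) (P : A -> Prop) :
  length Q = m -> NoDup Q ->
  (forall a, (a < m)%nat -> In (f a) Q) ->
  (forall a b, (a < m)%nat -> (b < m)%nat -> f a = f b -> a = b) ->
  cnt (seq 0 m) (fun a => P (f a)) = cnt Q P.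
Proof.
  intros Hlen HQ Hin Hinj.
  rewrite <- cnt_map; apply cnt_perm, NoDup_Permutation_bis.
  - apply FinFun.Injective_map_NoDup_in; [|apply seq_NoDup].
    intros a b Ha Hb; apply in_seq in Ha, Hb; apply Hinj; lia.
  - rewrite length_map, length_seq; lia.
  - intros u Hu; apply in_map_iff in Hu as [a [<- Ha]].
    apply in_seq in Ha; apply Hin; lia.
Qed.

Lemma prod_unit_interval (l : list nat) (a : nat -> R) :
  (forall j, In j l -> 0 <= a j <= 1) ->
  0 <= fold_right Rmult 1 (map a l) <= 1.
Proof.
  induction l as [|j l IH]; intros Ha; simpl; [lra|].
  destruct (Ha j (or_introl eq_refl)).
  destruct IH; [intros; apply Ha; simpl; auto|].
  split; nra.
Qed.

Lemma Rabs_prod_sub_le (l : list nat) (a b e : nat -> R) :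
  (forall j, In j l -> 0 <= a j <= 1 /\ 0 <= b j <= 1 /\ Rabs (a j - b j) <= e j) ->
  Rabs (fold_right Rmult 1 (map a l) - fold_right Rmult 1 (map b l))
    <= fold_right Rplus 0 (map e l).
Proof.
  induction l as [|j l IH]; intros Hab; simpl.
  - rewrite Rminus_diag, Rabs_R0; lra.
  - destruct (Hab j (or_introl eq_refl)) as [Ha [Hb He]].
    assert (Htail : forall k, In k l ->
              0 <= a k <= 1 /\ 0 <= b k <= 1 /\ Rabs (a k - b k) <= e k)
      by (intros; apply Hab; simpl; auto).
    specialize (IH Htail).
    pose proof (prod_unit_interval l b (fun k Hk => proj1 (proj2 (Htail k Hk)))) as HB.
    set (A := fold_right Rmult 1 (map a l)) in *.
    set (B := fold_right Rmult 1 (map b l)) in *.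
    replace (a j * A - b j * B) with (a j * (A - B) + (a j - b j) * B) by ring.
    eapply Rle_trans; [apply Rabs_triang|].
    rewrite !Rabs_mult, (Rabs_pos_eq (a j)), (Rabs_pos_eq B) by lra.
    pose proof (Rabs_pos (A - B)); pose proof (Rabs_pos (a j - b j)).
    nra.
Qed.

Lemma infinite_sum_two (f : nat -> R) :
  (forall k, (2 <= k)%nat -> f k = 0) -> infinite_sum f (f 0%nat + f 1%nat).
Proof.
  intros Hf e He; exists 1%nat; intros k Hk.
  replace (sum_f_R0 f k) with (f 0%nat + f 1%nat).
  - unfold Rdist; rewrite Rminus_diag, Rabs_R0; lra.
  - induction k as [|k IHk]; [lia|].
    destruct (Nat.eq_dec k 0) as [->|Hk0]; [reflexivity|].
    simpl; rewrite <- IHk, (Hf (S k)) by lia; ring.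
Qed.

Section FiniteMeasure.

Variables (U : Type) (M : (U -> Prop) -> Prop) (mu : (U -> Prop) -> R).
Hypothesis Hmu : is_finite_measure M mu.

Lemma measure_add_compl (X : U -> Prop) :
  M X -> mu X + mu (fun x => ~ X x) = mu (fun _ => True).
Proof.
  intros HX; destruct Hmu as [[HT [HC _]] [H0 [_ Hadd]]].
  set (F := fun k : nat => match k with
                           | 0%nat => X
                           | 1%nat => fun x => ~ X x
                           | _ => fun _ => False end).
  assert (Hempty : M (fun _ => False)).
  { replace (fun _ : U => False) with (fun x : U => ~ (fun _ : U => True) x); auto.
    apply functional_extensionality; intros; apply propositional_extensionality; tauto. }
  assert (HF : forall k, M (F k)) by (intros [|[|k]]; simpl; auto).
  assert (Hdisj : forall k l, k <> l -> forall x, F k x -> F l x -> False)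
    by (intros [|[|k]] [|[|l]] Hkl x; simpl; tauto || lia).
  assert (Hcover : (fun x => exists k, F k x) = (fun _ => True)).
  { apply functional_extensionality; intros x; apply propositional_extensionality.
    split; [auto|intros _].
    destruct (classic (X x)); [exists 0%nat|exists 1%nat]; simpl; auto. }
  pose proof (Hadd F HF Hdisj) as Hsum; rewrite Hcover in Hsum.
  symmetry; apply (uniqueness_sum _ _ _ Hsum), infinite_sum_two.
  intros [|[|k]] Hk; [lia|lia|apply H0].
Qed.

Lemma measure_ratio_unit_interval (X : U -> Prop) :
  M X -> 0 <= mu X / mu (fun _ => True) <= 1.
Proof.
  intros HX; apply Rdiv_unit_interval.
  destruct Hmu as [[_ [HC _]] [_ [Hpos _]]].
  pose proof (measure_add_compl X HX); pose proof (Hpos _ HX); pose proof (Hpos _ (HC _ HX)).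
  lra.
Qed.

End FiniteMeasure.

Lemma frac_map_box {U : Type} (n m : nat) (sigma : nat -> nat -> U)
  (X : nat -> U -> Prop) (PR : list (nat -> nat)) :
  (forall p, In p PR -> forall j, (j < n)%nat -> (p j < m)%nat) ->
  frac (map (fun p => fun i => sigma i (p i)) PR) (box n X)
  = frac PR (box n (fun j a => (a < m)%nat /\ X j (sigma j a))).
Proof.
  intros HPR; unfold frac; rewrite length_map, cnt_map; f_equal.
  apply cnt_ext_in; intros p Hp; unfold box.
  split; intros H i Hi; [split; auto|apply H; auto].
Qed.

Theorem mainTheorem11
  (U : Type) (M : (U -> Prop) -> Prop) (mu : (U -> Prop) -> R)
  (Hmu : is_finite_measure M mu) (HmuU : 0 < mu (fun _ => True))
  (n m : nat)
  (Xfam : nat -> (U -> Prop) -> Prop)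
  (HXmeas : forall i, (i < n)%nat -> forall A, Xfam i A -> M A)
  (Q : nat -> list U) (eps : nat -> R)
  (HQlen : forall i, (i < n)%nat -> length (Q i) = m)
  (HQnodup : forall i, (i < n)%nat -> NoDup (Q i))
  (HQdisc : forall i, (i < n)%nat -> disc_le mu (Q i) (Xfam i) (eps i))
  (sigma : nat -> nat -> U)
  (Hsig_in : forall i, (i < n)%nat -> forall a, (a < m)%nat -> In (sigma i a) (Q i))
  (Hsig_inj : forall i, (i < n)%nat -> forall a b, (a < m)%nat -> (b < m)%nat ->
       sigma i a = sigma i b -> a = b)
  (PR : list (nat -> nat)) (epsR : R)
  (HPR : forall p, In p PR -> forall j, (j < n)%nat -> (p j < m)%nat)
  (HPRdisc : comb_disc_le n m PR epsR) :
  disc_prod_le mu n (map (fun p => fun i => sigma i (p i)) PR) Xfam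
    (epsR + sumR n eps).
Proof.
  intros X HX.
  set (I := fun j a => (a < m)%nat /\ X j (sigma j a)).
  assert (Hrect := HPRdisc I (fun j a HIa => proj1 HIa)).
  assert (Hfactor_frac : forall j, (j < n)%nat ->
            cnt (seq 0 m) (I j) / INR m = frac (Q j) (X j)).
  { intros j Hj; unfold frac; rewrite HQlen by exact Hj; f_equal.
    rewrite <- (cnt_enum (sigma j) m (Q j) (X j) (HQlen j Hj) (HQnodup j Hj)
                  (Hsig_in j Hj) (Hsig_inj j Hj)).
    apply cnt_ext_in; intros a Ha; apply in_seq in Ha; unfold I.
    split; [tauto|split; [lia|assumption]]. }
  set (a := fun j => cnt (seq 0 m) (I j) / INR m).
  set (b := fun j => mu (X j) / mu (fun _ => True)).
  assert (Hab : forall j, In j (seq 0 n) ->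
            0 <= a j <= 1 /\ 0 <= b j <= 1 /\ Rabs (a j - b j) <= eps j).
  { intros j Hj; apply in_seq in Hj; assert (Hjn : (j < n)%nat) by lia.
    unfold a, b; rewrite Hfactor_frac by exact Hjn.
    pose proof (HXmeas j Hjn _ (HX j Hjn)) as HXj.
    split; [apply frac_unit_interval|split].
    - exact (measure_ratio_unit_interval U M mu Hmu (X j) HXj).
    - exact (HQdisc j Hjn (X j) (HX j Hjn)). }
  unfold prodR, sumR in *.
  rewrite (frac_map_box n m sigma X PR HPR); fold I.
  set (PA := fold_right Rmult 1 (map a (seq 0 n))) in *.
  set (PB := fold_right Rmult 1 (map b (seq 0 n))).
  replace (frac PR (box n I) - PB) with ((frac PR (box n I) - PA) + (PA - PB)) by ring.
  eapply Rle_trans; [apply Rabs_triang|].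
  apply Rplus_le_compat; [exact Hrect|exact (Rabs_prod_sub_le _ a b eps Hab)].
Qed.
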